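(* Consider Online Convex Optimization with Memory (OCO-M) with memory length $m\ge 0$ over horizon $T$: at each $t=1,\dots,T$ the learner picks $\mathbf{x}_t\in\mathcal{X}$, then a loss $f_t:\mathcal{X}^{m+1}\to\mathbb{R}$ is revealed and the learner suffers $f_t(\mathbf{x}_{t-m},\dots,\mathbf{x}_t)$, with $\mathbf{x}_\tau=\mathbf{0}$ for $\tau\le 0$. Assume: (i) $\mathcal{X}$ is convex, compact, contains $\mathbf{0}$ and has diameter at most $D$; (ii) each unary loss $\widetilde f_t(\mathbf{x}):=f_t(\mathbf{x},\dots,\mathbf{x})$ is convex; (iii) $0\le a\le f_t\le a+c$ on $\mathcal{X}^{m+1}$ for all $t$; (iv) each $f_t$ is coordinate-wise $L$-Lipschitz: $|f_t(\mathbf{x}_0,\dots,\mathbf{x}_m)-f_t(\mathbf{y}_0,\dots,\mathbf{y}_m)|\le L\sum_{i=0}^m\|\mathbf{x}_i-\mathbf{y}_i\|_2$; (v) $\|\nabla\widetilde f_t(\mathbf{x})\|_2\le G$ for all $\mathbf{x}\in\mathcal{X}$ and $t$. Run OFW on the unary functions $\widetilde f_1,\dots,\widetilde f_T$ (initialize $\mathbf{x}_1\in\mathcal{X}$; $\mathbf{x}_t'\in\arg\min_{\mathbf{x}\in\mathcal{X}}\langle\nabla\widetilde f_t(\mathbf{x}_t),\mathbf{x}\rangle$; $\mathbf{x}_{t+1}=(1-\eta)\mathbf{x}_t+\eta\mathbf{x}_t'$) with step size $\eta=\mathcal{O}(\sqrt{(1+V_T)/T})$. Then for any comparator sequence $(\mathbf{v}_1,\dots,\mathbf{v}_T)\in\mathcal{X}^T$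 (with $\mathbf{v}_\tau=\mathbf{0}$ for $\tau\le0$), $$\operatorname{Regret}_T^D:=\sum_{t=1}^T f_t(\mathbf{x}_{t-m},\dots,\mathbf{x}_t)-\sum_{t=1}^T f_t(\mathbf{v}_{t-m},\dots,\mathbf{v}_t)\le\mathcal{O}\big(\sqrt{T(1+V_T+D_T)}+C_T\big)\le\mathcal{O}\big(\sqrt{T(1+V_T+D_T+C_T)}\big).$$
   Context: $V_T=\sum_{t=1}^T\sup_{\mathbf{x}\in\mathcal{X}}|\widetilde f_t(\mathbf{x})-\widetilde f_{t-1}(\mathbf{x})|$, $D_T=\sum_{t=1}^T\|\nabla\widetilde f_t(\mathbf{x}_t)-\nabla\widetilde f_{t-1}(\mathbf{x}_{t-1})\|_2^2$ (with a fixed initial $\widetilde f_0$, $\mathbf{x}_0$ by indexing convention), and $C_T=\sum_{t=2}^T\|\mathbf{v}_t-\mathbf{v}_{t-1}\|_2$ is the path length of the comparators. $\mathcal{O}(\cdot)$ hides constants depending only on $D,a,c,L,m,G$. *)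

From HB Require Import structures.
From mathcomp Require Import all_boot all_order all_algebra.
From mathcomp Require Import all_classical all_reals all_analysis.
Set Implicit Arguments. Unset Strict Implicit. Unset Printing Implicit Defensive.
Import Order.TTheory GRing.Theory Num.Theory.
Import numFieldNormedType.Exports.
Local Open Scope classical_set_scope.
Local Open Scope ring_scope.

Section OCOM.
Variables (R : realType) (d : nat).
Notation vec := 'rV[R]_d.

Definition dot (u w : vec) : R := \sum_(i < d) u 0 i * w 0 i.
Definition norm2 (u : vec) : R := Num.sqrt (dot u u).

Definition convex_setX (X : set vec) : Prop :=
  forall x y (l : R), X x -> X y -> 0 <= l <= 1 -> X ((1 - l) *: x + l *: y).

Definition convex_on (X : set vec) (h : vec -> R) : Prop :=
  forall x y (l : R), X x -> X y -> 0 <= l <= 1 ->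
    h ((1 - l) *: x + l *: y) <= (1 - l) * h x + l * h y.

Definition is_gradient (h : vec -> R) (g : vec) (x : vec) : Prop :=
  forall e : R, 0 < e -> exists2 del : R, 0 < del &
    forall y : vec, norm2 y < del ->
      `| h (x + y) - h x - dot g y | <= e * norm2 y.

(* the window (z_{t-m}, ..., z_t), with z_tau = 0 for tau <= 0;
   index i : 'I_(m+1) corresponds to time t - m + i *)
Definition window (m : nat) (z : nat -> vec) (t : nat) : 'I_m.+1 -> vec :=
  fun i => if (m < t + i)%N then z (t + i - m)%N else 0.

Definition unary (m : nat) (F : ('I_m.+1 -> vec) -> R) (x : vec) : R :=
  F (fun _ => x).

Definition VT (m : nat) (X : set vec) (f : nat -> ('I_m.+1 -> vec) -> R)
  (T : nat) : R :=
  \sum_(1 <= t < T.+1)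
     sup [set `| unary (f t) x - unary (f t.-1) x | | x in X].

Definition DT (grad : nat -> vec -> vec) (x : nat -> vec) (T : nat) : R :=
  \sum_(1 <= t < T.+1) norm2 (grad t (x t) - grad t.-1 (x t.-1)) ^+ 2.

Definition CT (v : nat -> vec) (T : nat) : R :=
  \sum_(2 <= t < T.+1) norm2 (v t - v t.-1).

Definition regretD (m : nat) (f : nat -> ('I_m.+1 -> vec) -> R)
  (x v : nat -> vec) (T : nat) : R :=
  \sum_(1 <= t < T.+1) f t (window x t) - \sum_(1 <= t < T.+1) f t (window v t).

End OCOM.

From HB Require Import structures.
From mathcomp Require Import all_boot all_order all_algebra.
From mathcomp Require Import all_classical all_reals all_analysis.
From mathcomp Require Import ring lra zify.
Import Order.TTheory GRing.Theory Num.Theory.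
Import numFieldNormedType.Exports.
Local Open Scope classical_set_scope.
Local Open Scope ring_scope.

Set Implicit Arguments. Unset Strict Implicit. Unset Printing Implicit Defensive.

(* The dynamic regret with memory splits into the dynamic regret of the unary losses
   f~_t(y) = f_t(y, ..., y) and, for z = x and z = v, the memory costs
   sum_t |f_t(z_{t-m}, ..., z_t) - f~_t(z_t)|.  By Lipschitzness a memory cost is at most L
   times the distance from the window to z_t, i.e. D (when the window reaches before time 1)
   plus the last m path increments of z; summed over t this is O(D + path length of z), and
   the OFW iterates move by at most eta D per step.
   For the unary losses, convexity of f~_t and f~_{t+1} and the optimality of the Frank-Wolfe
   vertex against the comparator v_t give, for each step,
     eta (f~_t(x_t) - f~_t(v_t)) <= f~_t(x_t) - f~_{t+1}(x_{t+1}) + s_{t+1}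
                                     + eta D |grad f~_{t+1}(x_{t+1}) - grad f~_t(x_t)|,
   where s_t is the sup-variation of the losses: the first term telescopes, the variations sum
   to V_T and the gradient drifts to at most sqrt(T (1 + D_T)).  The step size
   eta = sqrt((1 + V_T) / T) / (1 + c) balances (c + V_T) / eta against T eta D.  Finally
   C_T <= T D gives C_T <= sqrt(D T C_T), hence the second form of the bound. *)

Section Euclidean.
Variables (R : realType) (d : nat).
Implicit Types (u w z : 'rV[R]_d) (p : R).

Lemma dotC u w : dot u w = dot w u.
Proof. by apply: eq_bigr => i _; rewrite mulrC. Qed.

Lemma dotDl u w z : dot (u + w) z = dot u z + dot w z.
Proof. by rewrite /dot -big_split; apply: eq_bigr => i _; rewrite mxE mulrDl. Qed.

Lemma dotNl u z : dot (- u) z = - dot u z.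
Proof. by rewrite /dot -sumrN; apply: eq_bigr => i _; rewrite mxE mulNr. Qed.

Lemma dotBl u w z : dot (u - w) z = dot u z - dot w z.
Proof. by rewrite dotDl dotNl. Qed.

Lemma dotZl p u z : dot (p *: u) z = p * dot u z.
Proof. by rewrite /dot mulr_sumr; apply: eq_bigr => i _; rewrite mxE mulrA. Qed.

Lemma dotBr u w z : dot z (u - w) = dot z u - dot z w.
Proof. by rewrite dotC dotBl !(dotC z). Qed.

Lemma dotDr u w z : dot z (u + w) = dot z u + dot z w.
Proof. by rewrite dotC dotDl !(dotC z). Qed.

Lemma dotZr p u z : dot z (p *: u) = p * dot z u.
Proof. by rewrite dotC dotZl dotC. Qed.

Lemma dotxx_ge0 u : 0 <= dot u u.
Proof. by apply: sumr_ge0 => i _; rewrite -expr2 sqr_ge0. Qed.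

Lemma norm2_ge0 u : 0 <= norm2 u.
Proof. exact: sqrtr_ge0. Qed.

Lemma sqr_norm2 u : norm2 u ^+ 2 = dot u u.
Proof. by rewrite sqr_sqrtr // dotxx_ge0. Qed.

Lemma norm2Z p u : 0 <= p -> norm2 (p *: u) = p * norm2 u.
Proof.
by move=> p0; rewrite /norm2 dotZl dotZr mulrA -expr2 sqrtrM ?sqr_ge0 // sqrtr_sqr ger0_norm.
Qed.

Lemma norm2N u : norm2 (- u) = norm2 u.
Proof. by rewrite -scaleN1r /norm2 dotZl dotZr !mulN1r opprK. Qed.

Lemma norm2_sym u w : norm2 (u - w) = norm2 (w - u).
Proof. by rewrite -norm2N opprB. Qed.

(* Lagrange's identity: 2 (|u|^2 |w|^2 - <u,w>^2) = sum_(i,j) (u_i w_j - u_j w_i)^2. *)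
Lemma dot_sqr_le u w : dot u w ^+ 2 <= dot u u * dot w w.
Proof.
pose S := \sum_i \sum_j u 0 i ^+ 2 * w 0 j ^+ 2.
pose Q := \sum_i \sum_j (u 0 i * w 0 i) * (u 0 j * w 0 j).
have lagrange : \sum_i \sum_j (u 0 i * w 0 j - u 0 j * w 0 i) ^+ 2 = 2 * (S - Q).
  transitivity (\sum_i (\sum_j u 0 i ^+ 2 * w 0 j ^+ 2 + \sum_j u 0 j ^+ 2 * w 0 i ^+ 2
      - 2 * \sum_j (u 0 i * w 0 i) * (u 0 j * w 0 j))).
    apply: eq_bigr => i _; rewrite mulr_sumr -big_split -sumrB /=.
    by apply: eq_bigr => j _; ring.
  have S_sym : \sum_i \sum_j u 0 j ^+ 2 * w 0 i ^+ 2 = S by rewrite exchange_big.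
  by rewrite sumrB big_split -mulr_sumr /= S_sym -/S -/Q; ring.
have -> : dot u u * dot w w = S.
  rewrite /dot mulr_suml; apply: eq_bigr => i _; rewrite mulr_sumr.
  by apply: eq_bigr => j _; rewrite !expr2.
have -> : dot u w ^+ 2 = Q.
  by rewrite expr2 /dot mulr_suml; apply: eq_bigr => i _; rewrite mulr_sumr.
rewrite -subr_ge0 -(pmulr_rge0 _ (ltr0n R 2)) -lagrange.
by apply: sumr_ge0 => i _; apply: sumr_ge0 => j _; rewrite sqr_ge0.
Qed.

Lemma cauchy_schwarz u w : dot u w <= norm2 u * norm2 w.
Proof.
rewrite -sqrtrM ?dotxx_ge0 //; apply: le_trans (ler_norm _) _.
by rewrite -sqrtr_sqr ler_wsqrtr // dot_sqr_le.
Qed.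

Lemma norm2D u w : norm2 (u + w) <= norm2 u + norm2 w.
Proof.
have cs := cauchy_schwarz u w.
rewrite -[norm2 u + norm2 w]ger0_norm ?addr_ge0 ?norm2_ge0 // -sqrtr_sqr.
by rewrite ler_wsqrtr // sqrrD !sqr_norm2 dotDl !dotDr (dotC w u); lra.
Qed.

Lemma norm20 : norm2 (0 : 'rV[R]_d) = 0.
Proof. by rewrite -(scale0r (0 : 'rV[R]_d)) norm2Z // mul0r. Qed.

Lemma norm2_path (z : nat -> 'rV[R]_d) t n :
  norm2 (z (t - n)%N - z t) <= \sum_(0 <= k < n) norm2 (z (t - k)%N - z (t - k).-1).
Proof.
elim: n => [|n IH]; first by rewrite subn0 subrr norm20 big_geq.
rewrite big_nat_recr //= addrC -(subrK (z (t - n)%N) (z _)) -addrA.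
apply: le_trans (norm2D _ _) _; rewrite -subnS norm2_sym.
by apply: lerD.
Qed.

End Euclidean.

Section FrankWolfe.
Variables (R : realType) (d : nat) (X : set 'rV[R]_d).

Lemma convex_ge_tangent (F : 'rV[R]_d -> R) g x y :
  convex_on X F -> is_gradient F g x -> X x -> X y -> F x + dot g (y - x) <= F y.
Proof.
move=> Fcvx Fg Xx Xy; set N := norm2 (y - x); have N0 : 0 <= N := norm2_ge0 _.
apply/ler_addgt0Pr => e e0.
have e'0 : 0 < e / (N + 1) by rewrite divr_gt0 //; lra.
have [del del0 Fdel] := Fg _ e'0.
pose l := del / (del + N + 1).
have l0 : 0 < l by rewrite divr_gt0 //; lra.
have l1 : l <= 1 by rewrite ler_pdivrMr; lra.
have lN : l * N < del by rewrite /l mulrAC ltr_pdivrMr; nra.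
have := Fdel (l *: (y - x)); rewrite norm2Z ?(ltW l0) // dotZr => /(_ lN).
have -> : x + l *: (y - x) = (1 - l) *: x + l *: y.
  by apply/rowP => i; rewrite !mxE; ring.
move=> /ler_normlP [near_tangent _].
have := Fcvx x y l Xx Xy; rewrite (ltW l0) l1 => /(_ isT) Fchord.
have e'N : e / (N + 1) * N <= e by rewrite mulrAC ler_pdivrMr; nra.
suff : l * (F x + dot g (y - x) - F y - e / (N + 1) * N) <= 0.
  by rewrite pmulr_rle0 //; lra.
move: near_tangent Fchord; rewrite -/N; set Fl := F _ => near_tangent Fchord; nra.
Qed.

(* [x'] minimises the linear model of [F] at [x] over [X], so it beats every comparator [u]:
   no path length of the comparators enters, only the drift from [g] to the next gradient [gn]. *)
Lemma frank_wolfe_step (F Fn : 'rV[R]_d -> R) g gn x x' xn u (eta s D : R) :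
  convex_on X F -> convex_on X Fn -> X x -> X x' -> X xn -> X u ->
  is_gradient F g x -> is_gradient Fn gn xn ->
  (forall y z, X y -> X z -> norm2 (y - z) <= D) ->
  dot g x' <= dot g u -> `|Fn x - F x| <= s ->
  0 <= eta -> xn = (1 - eta) *: x + eta *: x' ->
  eta * (F x - F u) <= F x - Fn xn + s + eta * (D * norm2 (gn - g)).
Proof.
move=> Fcvx Fncvx Xx Xx' Xxn Xu Fg Fng diam fw /ler_normlP[_ Fvar] eta0 xnE.
have tangent_u := convex_ge_tangent Fcvx Fg Xx Xu.
have tangent_x := convex_ge_tangent Fncvx Fng Xxn Xx.
have xstep : x - xn = eta *: (x - x').
  by rewrite xnE; apply/rowP => i; rewrite !mxE; ring.
rewrite xstep dotZr in tangent_x.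
have descent : eta * (F x - F u) <= eta * dot g (x - x').
  by rewrite ler_wpM2l // dotBr; move: tangent_u; rewrite dotBr; lra.
have drift : eta * dot (g - gn) (x - x') <= eta * (D * norm2 (gn - g)).
  rewrite ler_wpM2l // mulrC norm2_sym; apply: le_trans (cauchy_schwarz _ _) _.
  by rewrite ler_wpM2l ?norm2_ge0 ?diam.
have gsplit : dot g (x - x') = dot gn (x - x') + dot (g - gn) (x - x').
  by rewrite dotBl; ring.
rewrite gsplit mulrDr in descent; lra.
Qed.

End FrankWolfe.

Section RealSums.
Variable R : realType.

Lemma sum_subn_le (h : nat -> R) n k : (forall t, 0 <= h t) -> h 0%N = 0 ->
  \sum_(0 <= t < n) h (t - k)%N <= \sum_(0 <= t < n) h t.
Proof.
move=> h_ge0 h0; elim: k => [|k IH]; first by under eq_bigr do rewrite subn0.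
apply: le_trans IH; case: n => [|n]; first by rewrite !big_geq.
rewrite big_nat_recl // sub0n h0 add0r big_nat_recr //=.
under eq_bigr do rewrite subSS.
by rewrite lerDl.
Qed.

Lemma sum_le_sqrt (a : nat -> R) m n :
  \sum_(m <= i < n) a i <= Num.sqrt ((n - m)%:R * (1 + \sum_(m <= i < n) a i ^+ 2)).
Proof.
case: (leqP n m) => [nm | mn]; first by rewrite big_geq ?sqrtr_ge0.
set k : R := (n - m)%:R; set S := \sum_(m <= i < n) a i ^+ 2.
have S0 : 0 <= S by apply: sumr_ge0 => i _; apply: sqr_ge0.
have k0 : 0 < k by rewrite ltr0n subn_gt0.
pose lam := Num.sqrt k / Num.sqrt (1 + S).
have lam0 : 0 < lam by rewrite divr_gt0 ?sqrtr_gt0 //; lra.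
have amgm i : a i <= (lam * a i ^+ 2 + lam^-1) / 2.
  have : 0 <= lam^-1 * (lam * a i - 1) ^+ 2 by rewrite mulr_ge0 ?invr_ge0 ?sqr_ge0 ?ltW.
  have -> : lam^-1 * (lam * a i - 1) ^+ 2 = lam * a i ^+ 2 - 2 * a i + lam^-1.
    by field; rewrite gt_eqF.
  lra.
apply: le_trans (ler_sum_nat (fun i _ => amgm i)) _.
rewrite -mulr_suml big_split /= -mulr_sumr sumr_const_nat -[lam^-1 *+ _]mulr_natr -/S -/k.
have a0 : 0 < Num.sqrt k by rewrite sqrtr_gt0.
have b0 : 0 < Num.sqrt (1 + S) by rewrite sqrtr_gt0; lra.
have lamS : lam * (1 + S) = Num.sqrt k * Num.sqrt (1 + S).
  by rewrite -{1}(sqr_sqrtr (_ : 0 <= 1 + S)) /lam; [field; rewrite gt_eqF | lra].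
have lamk : lam^-1 * k = Num.sqrt k * Num.sqrt (1 + S).
  by rewrite -{1}(sqr_sqrtr (ltW k0)) /lam; field; rewrite !gt_eqF.
have : lam * S <= lam * (1 + S) by rewrite ler_pM2l //; lra.
rewrite sqrtrM ?(ltW k0) //; lra.
Qed.

Lemma sum_indicator (m n : nat) : \sum_(1 <= t < n.+1) ((t <= m)%N%:R : R) = (minn n m)%:R.
Proof.
elim: n => [|n IH]; first by rewrite big_geq // min0n.
by rewrite big_nat_recr //= IH -natrD; congr (_%:R); case: (leqP n.+1 m) => /= h; lia.
Qed.

Lemma le_sqrt_mul (C D E T : R) : 0 <= C -> C <= T * D -> 0 <= D -> 0 <= E -> 0 <= T ->
  C <= Num.sqrt D * Num.sqrt (T * (E + C)).
Proof.
move=> C0 CTD D0 E0 T0; rewrite -sqrtrM // -[X in X <= _]ger0_norm // -sqrtr_sqr.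
by apply: ler_wsqrtr; nra.
Qed.

End RealSums.

Section StepSize.
Variables (R : realType) (c V T : R).
Hypotheses (c_ge0 : 0 <= c) (V_ge0 : 0 <= V) (V_le : V <= T * c) (T_ge1 : 1 <= T).

Let eta := (1 + c)^-1 * Num.sqrt ((1 + V) / T).

Let T_gt0 : 0 < T. Proof. exact: lt_le_trans ltr01 T_ge1. Qed.
Let V1_gt0 : 0 < 1 + V. Proof. by rewrite ltr_pwDl. Qed.
Let c1_gt0 : 0 < 1 + c. Proof. by rewrite ltr_pwDl. Qed.

Let etaE : eta = Num.sqrt (1 + V) / ((1 + c) * Num.sqrt T).
Proof. by rewrite /eta sqrtrM ?sqrtrV ?invfM ?(ltW V1_gt0) ?(ltW T_gt0) //; ring. Qed.

Lemma step_size_gt0 : 0 < eta.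
Proof. by rewrite etaE divr_gt0 ?mulr_gt0 ?sqrtr_gt0. Qed.

Lemma step_size_le1 : eta <= 1.
Proof.
have sqrt_le : Num.sqrt ((1 + V) / T) <= 1 + c.
  rewrite -[X in _ <= X]ger0_norm ?(ltW c1_gt0) // -sqrtr_sqr; apply: ler_wsqrtr.
  by rewrite ler_pdivrMr //; move: c_ge0 V_le T_ge1; nra.
by rewrite /eta -[X in _ <= X](mulVf (lt0r_neq0 c1_gt0)) ler_pM2l ?invr_gt0.
Qed.

Lemma step_size_regret : (c + V) / eta <= (1 + c) ^+ 2 * Num.sqrt (T * (1 + V)).
Proof.
have sT0 : 0 < Num.sqrt T by rewrite sqrtr_gt0.
have sV0 : 0 < Num.sqrt (1 + V) by rewrite sqrtr_gt0.
have sV2 : Num.sqrt (1 + V) ^+ 2 = 1 + V by rewrite sqr_sqrtr // ltW.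
have -> : (c + V) / eta = (c + V) * ((1 + c) * Num.sqrt T) / Num.sqrt (1 + V).
  by rewrite etaE; field; rewrite !lt0r_neq0.
rewrite ler_pdivrMr // sqrtrM ?(ltW T_gt0) //.
have -> : (1 + c) ^+ 2 * (Num.sqrt T * Num.sqrt (1 + V)) * Num.sqrt (1 + V) =
    (1 + c) * Num.sqrt (1 + V) ^+ 2 * ((1 + c) * Num.sqrt T) by ring.
rewrite sV2 ler_wpM2r ?mulr_ge0 ?(ltW c1_gt0) ?(ltW sT0) //.
by move: c_ge0 V_ge0; nra.
Qed.

Lemma step_size_horizon : T * eta <= Num.sqrt (T * (1 + V)).
Proof.
have sT0 : 0 < Num.sqrt T by rewrite sqrtr_gt0.
have sV0 : 0 < Num.sqrt (1 + V) by rewrite sqrtr_gt0.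
have -> : T * eta = (1 + c)^-1 * (Num.sqrt T * Num.sqrt (1 + V)).
  by rewrite etaE -{1}(sqr_sqrtr (ltW T_gt0)); field; rewrite !lt0r_neq0.
rewrite sqrtrM ?(ltW T_gt0) // ler_pdivrMl // ler_peMl ?mulr_gt0 //.
by rewrite lerDl.
Qed.

End StepSize.

Section Memory.
Variables (R : realType) (d m T : nat) (X : set 'rV[R]_d) (D : R).
Hypotheses (X0 : X 0) (X_diam : forall y z, X y -> X z -> norm2 (y - z) <= D).

Lemma diam_ge0 : 0 <= D.
Proof. exact: le_trans (norm2_ge0 _) (X_diam X0 X0). Qed.

Definition path_incr (z : nat -> 'rV[R]_d) r :=
  if (1 < r)%N then norm2 (z r - z r.-1) else 0.

Lemma path_incr_ge0 z r : 0 <= path_incr z r.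
Proof. by rewrite /path_incr; case: ifP => // _; apply: norm2_ge0. Qed.

Lemma sum_path_incr z : \sum_(0 <= r < T.+1) path_incr z r = CT z T.
Proof. by rewrite /CT (@big_nat_widenl _ _ _ 2 0) // big_mkcond. Qed.

Lemma CT_le_diam z : (forall r, (1 <= r <= T)%N -> X (z r)) -> CT z T <= T%:R * D.
Proof.
move=> Xz; apply: le_trans (ler_sum_nat (G := fun _ => D) _) _.
  by move=> t /andP[t2 tT]; apply: X_diam; apply: Xz; lia.
rewrite sumr_const_nat -[D *+ _]mulr_natl; apply: ler_wpM2r; rewrite ?diam_ge0 // ler_nat; lia.
Qed.

Lemma window_dev_le z t (i : 'I_m.+1) : (forall r, (1 <= r <= T)%N -> X (z r)) ->
  (1 <= t <= T)%N ->
  norm2 (window z t i - z t) <= D * (t <= m)%N%:R + \sum_(0 <= k < m) path_incr z (t - k).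
Proof.
move=> Xz tT; have incr_ge0 := sumr_ge0 _ (fun k _ => path_incr_ge0 z (t - k)).
have i_le := ltn_ord i; rewrite /window; case: ifP => [mti | /negbT]; last first.
  rewrite -leqNgt => tim; have -> : (t <= m)%N by lia.
  rewrite sub0r norm2N mulr1 -[z t]subr0; apply: ler_wpDr => //.
  by apply: X_diam => //; apply: Xz.
apply: ler_wpDl; first by rewrite mulr_ge0 ?diam_ge0.
rewrite (_ : t + i - m = t - (m - i))%N; last by lia.
apply: le_trans (norm2_path z t (m - i)) _.
rewrite (@big_cat_nat _ _ _ (m - i) 0 m) //= ?leq_subr //; apply: ler_wpDr => //.
by apply: ler_sum_nat => k /andP[_ k_lt]; rewrite /path_incr ifT //; lia.
Qed.

Lemma sum_window_dev_le z : (forall r, (1 <= r <= T)%N -> X (z r)) ->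
  \sum_(1 <= t < T.+1) \sum_(i < m.+1) norm2 (window z t i - z t) <=
  (m.+1 * m)%:R * (D + CT z T).
Proof.
move=> Xz; pose dev t := D * (t <= m)%N%:R + \sum_(0 <= k < m) path_incr z (t - k).
apply: (@le_trans _ _ (\sum_(1 <= t < T.+1) (m.+1)%:R * dev t)).
  apply: ler_sum_nat => t tT.
  apply: le_trans (ler_sum _ (fun i _ => window_dev_le i Xz tT)) _.
  by rewrite sumr_const card_ord mulr_natl.
have shift k : \sum_(1 <= t < T.+1) path_incr z (t - k) <= CT z T.
  rewrite -sum_path_incr; apply: le_trans (sum_subn_le _ k (path_incr_ge0 z) _) => //.
  by rewrite [X in _ <= X](big_ltn (ltn0Sn T)) lerDr path_incr_ge0.
rewrite -mulr_sumr big_split /= -mulr_sumr sum_indicator exchange_big_nat /=.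
have := ler_sum_nat (fun k (_ : (0 <= k < m)%N) => shift k).
rewrite sumr_const_nat subn0 -mulr_natl => sum_shift.
have minTm : (minn T m)%:R <= m%:R :> R by rewrite ler_nat geq_minr.
have -> : (m.+1 * m)%:R * (D + CT z T) = m.+1%:R * (m%:R * (D + CT z T)) :> R.
  by rewrite natrM mulrA.
rewrite mulr1 ler_pM2l ?ltr0Sn //; have := ler_wpM2l diam_ge0 minTm; lra.
Qed.

Variables (f : nat -> ('I_m.+1 -> 'rV[R]_d) -> R) (L : R).
Hypothesis f_lipschitz : forall t (ys zs : 'I_m.+1 -> 'rV[R]_d), (t <= T)%N ->
  (forall i, X (ys i)) -> (forall i, X (zs i)) ->
  `|f t ys - f t zs| <= L * \sum_(i < m.+1) norm2 (ys i - zs i).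

Lemma memory_cost_le z : (forall r, (1 <= r <= T)%N -> X (z r)) ->
  \sum_(1 <= t < T.+1) `|f t (window z t) - unary (f t) (z t)| <=
  `|L| * (m.+1 * m)%:R * (D + CT z T).
Proof.
move=> Xz; rewrite -mulrA.
apply: le_trans (ler_wpM2l (normr_ge0 L) (sum_window_dev_le Xz)); rewrite mulr_sumr.
apply: ler_sum_nat => t /andP[t1 tT].
have Xwin (i : 'I_m.+1) : X (window z t i).
  by rewrite /window; case: ifP => // mti; apply: Xz; have := ltn_ord i; lia.
apply: le_trans (f_lipschitz tT Xwin (fun=> Xz t _)) _; first by rewrite t1.
by rewrite ler_wpM2r ?ler_norm ?sumr_ge0 // => i _; apply: norm2_ge0.
Qed.

End Memory.

Section Drift.
Variables (R : realType) (d T : nat) (grad : nat -> 'rV[R]_d -> 'rV[R]_d) (z : nat -> 'rV[R]_d).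

Lemma DT_ge0 : 0 <= DT grad z T.
Proof. by apply: sumr_ge0 => t _; apply: sqr_ge0. Qed.

Lemma CT_ge0 : 0 <= CT z T.
Proof. by apply: sumr_ge0 => t _; apply: norm2_ge0. Qed.

Lemma sum_grad_drift_le :
  \sum_(1 <= t < T) norm2 (grad t.+1 (z t.+1) - grad t (z t)) <=
  Num.sqrt (T%:R * (1 + DT grad z T)).
Proof.
have [-> | T_gt0] := posnP T; first by rewrite big_geq ?sqrtr_ge0.
apply: le_trans (sum_le_sqrt _ _ _) _; apply: ler_wsqrtr; apply: ler_pM.
- exact: ler0n.
- by rewrite addr_ge0 // sumr_ge0 // => t _; apply: sqr_ge0.
- by rewrite ler_nat leq_subr.
- by rewrite lerD2l /DT big_nat_recl //= lerDr sqr_ge0.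
Qed.

End Drift.

Section OnlineFrankWolfe.
Variables (R : realType) (d m T : nat) (X : set 'rV[R]_d).
Variables (f : nat -> ('I_m.+1 -> 'rV[R]_d) -> R) (grad : nat -> 'rV[R]_d -> 'rV[R]_d).
Variables (x x' v : nat -> 'rV[R]_d) (a c L D eta : R).
Hypotheses (T_gt0 : (0 < T)%N) (X_convex : convex_setX X) (X0 : X 0)
  (X_diam : forall y z, X y -> X z -> norm2 (y - z) <= D).
Hypotheses (f_convex : forall t, (t <= T)%N -> convex_on X (unary (f t)))
  (f_range : forall t ys, (t <= T)%N -> (forall i, X (ys i)) -> a <= f t ys <= a + c)
  (f_lipschitz : forall t (ys zs : 'I_m.+1 -> 'rV[R]_d), (t <= T)%N ->
     (forall i, X (ys i)) -> (forall i, X (zs i)) ->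
     `|f t ys - f t zs| <= L * \sum_(i < m.+1) norm2 (ys i - zs i))
  (gradP : forall t y, (t <= T)%N -> X y -> is_gradient (unary (f t)) (grad t y) y).
Hypotheses (X_x1 : X (x 1%N))
  (fw_vertex : forall t, (1 <= t <= T)%N ->
     X (x' t) /\ forall y, X y -> dot (grad t (x t)) (x' t) <= dot (grad t (x t)) y)
  (eta_gt0 : 0 < eta) (eta_le1 : eta <= 1)
  (x_update : forall t, (1 <= t < T)%N -> x t.+1 = (1 - eta) *: x t + eta *: x' t)
  (X_v : forall t, (1 <= t <= T)%N -> X (v t)).

Local Notation F t := (unary (f t)).

Lemma unary_range t y : (t <= T)%N -> X y -> a <= F t y <= a + c.
Proof. by move=> tT Xy; apply: f_range. Qed.

Lemma range_ge0 : 0 <= c.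
Proof. by have /andP[] := unary_range (leq0n T) X0; lra. Qed.

Let D_ge0 : 0 <= D := diam_ge0 X0 X_diam.

Let var t := sup [set `|F t y - F t.-1 y| | y in X].

Lemma variation_ubound t : (1 <= t <= T)%N ->
  ubound [set `|F t y - F t.-1 y| | y in X] c.
Proof.
move=> /andP[_ tT] r [y Xy <-].
have := unary_range tT Xy; have := unary_range (leq_trans (leq_pred t) tT) Xy.
by move=> /andP[? ?] /andP[? ?]; apply/ler_normlP; split; lra.
Qed.

Lemma le_variation t y : (1 <= t <= T)%N -> X y -> `|F t y - F t.-1 y| <= var t.
Proof.
by move=> tT Xy; apply: ub_le_sup; [exists c; apply: variation_ubound | exists y].
Qed.

Lemma variation_ge0 t : (1 <= t <= T)%N -> 0 <= var t.
Proof. by move=> tT; apply: le_trans (normr_ge0 _) (le_variation tT X0). Qed.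

Lemma variation_le t : (1 <= t <= T)%N -> var t <= c.
Proof. by move=> tT; apply: ge_sup (variation_ubound tT); exists `|F t 0 - F t.-1 0|, 0. Qed.

Lemma VT_ge0 : 0 <= VT X f T.
Proof. by rewrite /VT big_nat_cond; apply: sumr_ge0 => t /andP[tT _]; apply: variation_ge0. Qed.

Lemma VT_le : VT X f T <= T%:R * c.
Proof.
have -> : T%:R * c = \sum_(1 <= t < T.+1) c by rewrite sumr_const_nat subn1 mulr_natl.
by apply: (@ler_sum_nat _ _ _ var) => t /variation_le.
Qed.

Lemma iterate_in_X t : (1 <= t <= T)%N -> X (x t).
Proof.
elim: t => [//|[_ _|t IH /andP[_ tT]]]; first exact: X_x1.
have tT' : (1 <= t.+1 <= T)%N by rewrite /= ltnW.
rewrite x_update ?tT //; apply: X_convex; first exact: IH.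
  by case: (fw_vertex tT').
by rewrite (ltW eta_gt0) eta_le1.
Qed.

Lemma iterate_step_le t : (1 <= t < T)%N -> norm2 (x t.+1 - x t) <= eta * D.
Proof.
move=> /andP[t1 tT]; have tT' : (1 <= t <= T)%N by rewrite t1 ltnW.
have -> : x t.+1 - x t = eta *: (x' t - x t).
  by rewrite x_update ?t1 //; apply/rowP => i; rewrite !mxE; ring.
rewrite norm2Z ?ler_wpM2l ?(ltW eta_gt0) // X_diam //; last exact: iterate_in_X.
by case: (fw_vertex tT').
Qed.

Lemma CT_iterates_le : CT x T <= T%:R * eta * D.
Proof.
have step_le t : (2 <= t < T.+1)%N -> norm2 (x t - x t.-1) <= eta * D.
  by case: t => [//|t] tT; apply: iterate_step_le.
apply: le_trans (ler_sum_nat step_le) _.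
rewrite sumr_const_nat -mulrA -[_ *+ (_ - _)]mulr_natl ler_wpM2r ?ler_nat ?subSS ?leq_subr //.
by rewrite mulr_ge0 ?D_ge0 ?(ltW eta_gt0).
Qed.

Lemma ofw_step_le t : (1 <= t < T)%N ->
  eta * (F t (x t) - F t (v t)) <= F t (x t) - F t.+1 (x t.+1) + var t.+1
    + eta * (D * norm2 (grad t.+1 (x t.+1) - grad t (x t))).
Proof.
move=> tT; have [t1 tT1] := andP tT; have tT' : (1 <= t <= T)%N by rewrite t1 ltnW.
have [Xx' fw] := fw_vertex tT'; have Xx := iterate_in_X tT'.
have Xxn : X (x t.+1) by apply: iterate_in_X.
apply: (frank_wolfe_step (f_convex (ltnW tT1)) (f_convex tT1) Xx Xx' Xxn (X_v tT')
  (gradP (ltnW tT1) Xx) (gradP tT1 Xxn) X_diam (fw _ (X_v tT')) _ (ltW eta_gt0) (x_update tT)).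
exact: le_variation.
Qed.

Lemma unary_regret_le :
  \sum_(1 <= t < T.+1) (F t (x t) - F t (v t)) <=
  c + (c + VT X f T) / eta + D * Num.sqrt (T%:R * (1 + DT grad x T)).
Proof.
have telescope : \sum_(1 <= t < T) (F t (x t) - F t.+1 (x t.+1)) = F 1%N (x 1%N) - F T (x T).
  rewrite -opprB -(telescope_sumr (fun t => F t (x t)) T_gt0) -sumrN.
  by apply: eq_bigr => t _; rewrite opprB.
have var_sum : \sum_(1 <= t < T) var t.+1 <= VT X f T.
  by rewrite /VT big_nat_recl // lerDr variation_ge0.
have drift := ler_wpM2l (mulr_ge0 (ltW eta_gt0) D_ge0) (sum_grad_drift_le T grad x).
have sum_step := ler_sum_nat ofw_step_le.
rewrite -mulr_sumr in sum_step; set Sg := \sum_(1 <= t < T) _ in sum_step.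
rewrite big_split big_split /= telescope -!mulr_sumr in sum_step.
have XxT : X (x T) by apply: iterate_in_X; rewrite T_gt0 leqnn.
have XvT : X (v T) by apply: X_v; rewrite T_gt0 leqnn.
have /andP[? ?] := unary_range (leqnn T) XxT; have /andP[? ?] := unary_range (leqnn T) XvT.
have /andP[? ?] := unary_range T_gt0 X_x1.
have : eta * Sg <= eta * ((c + VT X f T) / eta + D * Num.sqrt (T%:R * (1 + DT grad x T))).
  by rewrite mulrDr mulrCA divff ?gt_eqF // mulr1; lra.
by rewrite ler_pM2l // big_nat_recr //= -/Sg; lra.
Qed.

Lemma regret_le :
  regretD f x v T <= c + (c + VT X f T) / eta + D * Num.sqrt (T%:R * (1 + DT grad x T))
    + `|L| * (m.+1 * m)%:R * (2 * D + T%:R * eta * D + CT v T).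
Proof.
pose mem z t := f t (window z t) - F t (z t).
have -> : regretD f x v T = \sum_(1 <= t < T.+1) mem x t
    + \sum_(1 <= t < T.+1) (F t (x t) - F t (v t)) - \sum_(1 <= t < T.+1) mem v t.
  by rewrite /regretD /mem !sumrB; ring.
have mem_x : \sum_(1 <= t < T.+1) mem x t <= `|L| * (m.+1 * m)%:R * (D + T%:R * eta * D).
  apply: le_trans (ler_sum_nat (fun t _ => ler_norm (mem x t))) _.
  apply: le_trans (memory_cost_le X0 X_diam f_lipschitz iterate_in_X) _.
  by rewrite ler_wpM2l ?mulr_ge0 // lerD2l CT_iterates_le.
have mem_v : - \sum_(1 <= t < T.+1) mem v t <= `|L| * (m.+1 * m)%:R * (D + CT v T).
  rewrite -sumrN; apply: le_trans (memory_cost_le X0 X_diam f_lipschitz X_v).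
  by apply: ler_sum_nat => t _; rewrite -normrN ler_norm.
have := unary_regret_le; lra.
Qed.

Lemma regret_le_tuned : eta = (1 + c)^-1 * Num.sqrt ((1 + VT X f T) / T%:R) ->
  regretD f x v T <= (c + (1 + c) ^+ 2 + D + `|L| * (m.+1 * m)%:R * (3 * D + 1)) *
    (Num.sqrt (T%:R * (1 + VT X f T + DT grad x T)) + CT v T).
Proof.
move=> etaE; have c0 := range_ge0; have D0 := D_ge0.
have V0 := VT_ge0; have DT0 := DT_ge0 T grad x; have T1 : 1 <= T%:R :> R by rewrite ler1n.
have C0 := CT_ge0 T v.
have M0 : 0 <= `|L| * (m.+1 * m)%:R by rewrite mulr_ge0.
have := step_size_regret c0 V0 T1; have := step_size_horizon c0 V0 T1.
have := regret_le; rewrite -etaE.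
set W := Num.sqrt (T%:R * (1 + VT X f T + DT grad x T)).
set S1 := Num.sqrt (T%:R * (1 + VT X f T)); set S2 := Num.sqrt (T%:R * (1 + DT grad x T)).
set M := `|L| * _ => reg hor inv.
have S1W : S1 <= W by apply: ler_wsqrtr; rewrite ler_wpM2l //; lra.
have S2W : S2 <= W by apply: ler_wsqrtr; rewrite ler_wpM2l //; lra.
have W1 : 1 <= W by rewrite -sqrtr1; apply: ler_wsqrtr; nra.
have W0 : 0 <= W by lra.
apply: le_trans reg _; rewrite /M.
have := ler_wpM2l (sqr_ge0 (1 + c)) S1W; have := ler_wpM2l D0 S2W.
have := ler_wpM2l M0 (ler_wpM2r D0 (le_trans hor S1W)); have := ler_wpM2l c0 W1.
have := ler_wpM2l (mulr_ge0 M0 D0) W1; have := mulr_ge0 M0 W0.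
have := mulr_ge0 (addr_ge0 (addr_ge0 c0 (sqr_ge0 (1 + c))) D0) C0.
have := mulr_ge0 (mulr_ge0 M0 D0) C0; lra.
Qed.

End OnlineFrankWolfe.

Theorem theorem5 (R : realType) (D a c L G : R) (m : nat) :
  exists kappa : R, 0 < kappa /\ exists K : R, 0 <= K /\
  forall (d : nat) (T : nat) (X : set 'rV[R]_d)
    (f : nat -> ('I_m.+1 -> 'rV[R]_d) -> R)
    (grad : nat -> 'rV[R]_d -> 'rV[R]_d)
    (x x' v : nat -> 'rV[R]_d),
    (1 <= T)%N ->
    (* (i) *)
    convex_setX X -> compact X -> X 0 ->
    (forall y z, X y -> X z -> norm2 (y - z) <= D) ->
    (* assumptions (ii)-(v), for t = 1..T and for the fixed initial f_0 *)
    (forall t, (t <= T)%N -> convex_on X (unary (f t))) ->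
    (forall t (ys : 'I_m.+1 -> 'rV[R]_d), (t <= T)%N -> (forall i, X (ys i)) ->
        0 <= a <= f t ys /\ f t ys <= a + c) ->
    (forall t (ys zs : 'I_m.+1 -> 'rV[R]_d), (t <= T)%N ->
        (forall i, X (ys i)) -> (forall i, X (zs i)) ->
        `| f t ys - f t zs | <= L * \sum_(i < m.+1) norm2 (ys i - zs i)) ->
    (forall t y, (t <= T)%N -> X y -> is_gradient (unary (f t)) (grad t y) y) ->
    (forall t y, (t <= T)%N -> X y -> norm2 (grad t y) <= G) ->
    (* OFW run on the unary losses, with x_0 = 0 (memory convention) *)
    x 0%N = 0 ->
    X (x 1%N) ->
    (forall t, (1 <= t <= T)%N ->
       X (x' t) /\ forall y, X y -> dot (grad t (x t)) (x' t) <= dot (grad t (x t)) y) ->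
    (forall t, (1 <= t < T)%N ->
       x t.+1 = (1 - Num.min 1 (kappa * Num.sqrt ((1 + VT X f T) / T%:R))) *: x t
                + Num.min 1 (kappa * Num.sqrt ((1 + VT X f T) / T%:R)) *: x' t) ->
    (* comparators *)
    (forall t, (1 <= t <= T)%N -> X (v t)) ->
    regretD f x v T <=
      K * (Num.sqrt (T%:R * (1 + VT X f T + DT grad x T)) + CT v T) /\
    regretD f x v T <=
      K * Num.sqrt (T%:R * (1 + VT X f T + DT grad x T + CT v T)).
Proof.
pose K1 := `|c| + (1 + `|c|) ^+ 2 + `|D| + `|L| * (m.+1 * m)%:R * (3 * `|D| + 1).
have K1_ge0 : 0 <= K1 by rewrite /K1 !addr_ge0 ?mulr_ge0 ?addr_ge0 ?mulr_ge0.
exists (1 + `|c|)^-1; split; first by rewrite invr_gt0 ltr_pwDl.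
exists (K1 * (1 + Num.sqrt `|D|)); split; first by rewrite mulr_ge0 ?addr_ge0 ?sqrtr_ge0.
move=> d T X f grad x x' v T_gt0 X_convex _ X0 X_diam f_convex f_bounds f_lipschitz gradP _ _
  X_x1 fw_vertex x_update X_v.
have f_range t ys : (t <= T)%N -> (forall i, X (ys i)) -> a <= f t ys <= a + c.
  by move=> tT Xys; case: (f_bounds t ys tT Xys) => /andP[_ ->].
have c0 := range_ge0 X0 f_range; have D0 := diam_ge0 X0 X_diam.
have V0 := VT_ge0 X0 f_range; have T1 : 1 <= T%:R :> R by rewrite ler1n.
have eta_gt0 := step_size_gt0 c0 V0 T1; have eta_le1 := step_size_le1 c0 (VT_le X0 f_range) T1.
have K1E : K1 = c + (1 + c) ^+ 2 + D + `|L| * (m.+1 * m)%:R * (3 * D + 1).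
  by rewrite /K1 (ger0_norm c0) (ger0_norm D0).
rewrite (ger0_norm c0) min_r // in x_update; rewrite (ger0_norm D0).
have := regret_le_tuned T_gt0 X_convex X0 X_diam f_convex f_range f_lipschitz gradP X_x1
  fw_vertex eta_gt0 eta_le1 x_update X_v erefl.
have C0 := CT_ge0 T v.
have := le_sqrt_mul C0 (CT_le_diam X0 X_diam X_v) D0
  (addr_ge0 (addr_ge0 ler01 V0) (DT_ge0 T grad x)) (ler0n _ T).
set W := Num.sqrt (T%:R * (1 + _ + _)); set W2 := Num.sqrt (T%:R * (_ + CT v T)).
rewrite -K1E => C_le regret.
have W_le : W <= W2 by apply: ler_wsqrtr; apply: ler_wpM2l => //; lra.
have W0 : 0 <= W := sqrtr_ge0 _.
split; apply: le_trans regret _; rewrite -mulrA; apply: ler_wpM2l => //.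
  by rewrite ler_peMl ?addr_ge0 // lerDl sqrtr_ge0.
lra.
Qed.
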